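(* Let $S=\{s_1,\dots,s_p\}$ and let $F=\{C_1,\dots,C_q\}$ be a family of subsets of $S$ with $q\le p$ and $\bigcup_j C_j=S$. Construct the graph $G$ as follows: vertices $a_1,\dots,a_p$, $b_1,\dots,b_q$, $z_1,\dots,z_p$, $u,v,u'$; edges $a_ib_j$ whenever $s_i\in C_j$, $a_iz_i$ for all $i\in[p]$, $ub_j$ for all $j\in[q]$, and $uv$, $vu'$. Then $G$ is a star-convex bipartite graph with parts $X=\{a_1,\dots,a_p,u,u'\}$ and $Y=\{b_1,\dots,b_q,z_1,\dots,z_p,v\}$ (with respect to the star on $X$ centred at $u$), and for every nonnegative integer $t$, $S$ has a cover of size at most $t$ if and only if $G$ has a vertex-edge dominating set of size at most $t+1$.
   Context: A cover of $S$ in the set system $(S,F)$ is a subfamily $C\subseteq F$ whose union is $S$. A vertex-edge dominating set of a graph $G$ is a set $D\subseteq V(G)$ such that for every edge $uv$, $(N_G[u]\cup N_G[v])\cap D\neq\emptyset$, where $N_G[x]$ is the closed neighbourhood of $x$. A star is a tree with exactly one non-pendant vertex. A bipartite graph $G=(X\cup Y,E)$ is star-convex if there is a star $T$ with vertex set $X$ such that for every $y\in Y$, $N_G(y)$ induces a subtree of $T$. *)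

From HB Require Import structures.
From mathcomp Require Import all_boot.
Set Implicit Arguments. Unset Strict Implicit. Unset Printing Implicit Defensive.

Definition closed_nbhd (T : finType) (e : rel T) (x : T) : {set T} :=
  [set y | (y == x) || e x y].

Definition open_nbhd (T : finType) (e : rel T) (x : T) : {set T} :=
  [set y | e x y].

Definition ve_dominating (T : finType) (e : rel T) (D : {set T}) : Prop :=
  forall x y, e x y -> (closed_nbhd e x :|: closed_nbhd e y) :&: D != set0.

(* cover of S (here S = 'I_p) in the indexed set system C : 'I_q -> {set 'I_p}:
   a subfamily (given by its index set J) whose union is S *)
Definition is_cover (p q : nat) (C : 'I_q -> {set 'I_p}) (J : {set 'I_q}) : Prop :=
  \bigcup_(j in J) C j = [set: 'I_p].

Definition bipartite_with (T : finType) (e : rel T) (X Y : {set T}) : Prop :=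
  [disjoint X & Y] /\ X :|: Y = [set: T] /\
  (forall x y, e x y -> (x \in X /\ y \in Y) \/ (x \in Y /\ y \in X)).

Definition star_rel (T : finType) (X : {set T}) (c : T) : rel T :=
  fun x y => [&& x \in X, y \in X & ((x == c) && (y != c)) || ((y == c) && (x != c))].

(* A \subseteq V(tr) induces a subtree of the tree tr: nonempty and connected
   in the subgraph induced by A (an induced connected subgraph of a tree is a tree) *)
Definition induces_subtree (T : finType) (tr : rel T) (A : {set T}) : Prop :=
  A != set0 /\
  forall x y, x \in A -> y \in A ->
    connect [rel a b | [&& tr a b, a \in A & b \in A]] x y.

Definition star_convex_wrt (T : finType) (e : rel T) (X Y : {set T}) (c : T) : Prop :=
  bipartite_with e X Y /\ c \in X /\
  forall y, y \in Y -> induces_subtree (star_rel X c) (open_nbhd e y).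

Inductive vtx (p q : nat) : Type :=
| VA of 'I_p | VB of 'I_q | VZ of 'I_p | VU | VV | VU'.

Section VtxFin.
Variables p q : nat.
Definition vtx_enc (x : vtx p q) : ('I_p + 'I_q) + ('I_p + 'I_3) :=
  match x with
  | VA i => inl (inl i) | VB j => inl (inr j) | VZ i => inr (inl i)
  | VU => inr (inr (@Ordinal 3 0 isT)) | VV => inr (inr (@Ordinal 3 1 isT))
  | VU' => inr (inr (@Ordinal 3 2 isT))
  end.
Definition vtx_dec (s : ('I_p + 'I_q) + ('I_p + 'I_3)) : vtx p q :=
  match s with
  | inl (inl i) => VA _ i | inl (inr j) => VB _ j | inr (inl i) => VZ _ i
  | inr (inr k) => if val k == 0 then VU _ _ else if val k == 1 then VV _ _ else VU' _ _
  end.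
Lemma vtx_encK : cancel vtx_enc vtx_dec. Proof. by case. Qed.
HB.instance Definition _ := Finite.copy (vtx p q) (can_type vtx_encK).
End VtxFin.

Definition Gadj (p q : nat) (C : 'I_q -> {set 'I_p}) (x y : vtx p q) : bool :=
  match x, y with
  | VA i, VB j => i \in C j
  | VB j, VA i => i \in C j
  | VA i, VZ k => i == k
  | VZ k, VA i => i == k
  | VU, VB _ | VB _, VU => true
  | VU, VV | VV, VU => true
  | VV, VU' | VU', VV => true
  | _, _ => false
  end.

Definition GX (p q : nat) : {set vtx p q} :=
  [set x | match x with VA _ | VU | VU' => true | _ => false end].
Definition GY (p q : nat) : {set vtx p q} :=
  [set x | match x with VB _ | VZ _ | VV => true | _ => false end].

(* The graph is bipartite by construction, and every open neighbourhood of a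
   vertex of Y is either a singleton {a_i} or contains the centre u, hence
   induces a substar.  A cover J gives the dominating set {u} ∪ {b_j | j ∈ J}:
   u reaches every edge except the a_i z_i, which are reached by any b_j with
   s_i ∈ C_j.  Conversely, send each vertex of a dominating set D to a set:
   b_j to C_j, a_i and z_i to some set containing s_i, and u, v, u' to nothing.
   Dominating the edge a_i z_i puts s_i in the image, and dominating the edge
   v u' forces a vertex of {u, v, u'} into D, so the image has at most
   #|D| - 1 sets. *)

From HB Require Import structures.
From mathcomp Require Import all_boot.

Set Implicit Arguments.
Unset Strict Implicit.
Unset Printing Implicit Defensive.

Lemma induces_subtree_set1 (T : finType) (tr : rel T) (x : T) :
  induces_subtree tr [set x].
Proof.
split; first by apply/set0Pn; exists x; rewrite inE.
by move=> y z /set1P -> /set1P ->; apply: connect0.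
Qed.

Lemma star_induces_subtree (T : finType) (X A : {set T}) (c : T) :
  c \in A -> A \subset X -> induces_subtree (star_rel X c) A.
Proof.
move=> cA AX; split; first by apply/set0Pn; exists c.
pose e := [rel a b | [&& star_rel X c a b, a \in A & b \in A]].
have to_centre x : x \in A -> connect e x c /\ connect e c x.
  move=> xA; have [->|nxc] := eqVneq x c; first by split; apply: connect0.
  have [xX cX] := (subsetP AX x xA, subsetP AX c cA).
  by split; apply: connect1;
    rewrite /= /star_rel xX cX xA cA eqxx nxc (negbTE nxc) /= ?orbT.
move=> x y /to_centre[xc _] /to_centre[_ cy]; exact: connect_trans xc cy.
Qed.

Lemma card_Some_preimset_lt (U : finType) (A : {set option U}) :
  None \in A -> #|[set j | Some j \in A]| < #|A|.
Proof.
move=> NA; rewrite (cardsD1 None A) NA add1n ltnS.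
rewrite -(card_imset _ (@Some_inj _ : injective (@Some U))); apply: subset_leq_card.
by apply/subsetP => o /imsetP[j]; rewrite !inE => jA ->.
Qed.

Lemma card_setU1_imset_le (aT rT : finType) (f : aT -> rT) (x : rT) (A : {set aT}) :
  #|x |: f @: A| <= #|A|.+1.
Proof. by rewrite cardsU1 -add1n leq_add ?leq_b1 ?leq_imset_card. Qed.

Section Construction.

Variables (p q : nat) (C : 'I_q -> {set 'I_p}).

Local Notation G := (@Gadj p q C).
Local Notation N := (closed_nbhd G).

Lemma Gadj_bipartite : bipartite_with G (GX p q) (GY p q).
Proof.
split; [|split].
- by rewrite -setI_eq0; apply/eqP/setP => x; rewrite !inE; case: x.
- by apply/setP; case=> *; rewrite !inE.
- by case=> [i|j|i| | |]; case=> [i'|j'|i'| | |] //= _; rewrite !inE; auto.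
Qed.

Lemma open_nbhd_VZ (i : 'I_p) : open_nbhd G (VZ q i) = [set VA q i].
Proof. by apply/setP; case=> [i'|j|i'| | |]; rewrite !inE //= eq_sym. Qed.

Lemma Gadj_star_convex : star_convex_wrt G (GX p q) (GY p q) (VU p q).
Proof.
split; [exact: Gadj_bipartite | split; first by rewrite inE].
case=> [i|j|i| | |]; rewrite inE // => _.
- apply: star_induces_subtree; first by rewrite inE.
  by apply/subsetP; case=> [?|?|?| | |]; rewrite !inE.
- by rewrite open_nbhd_VZ; apply: induces_subtree_set1.
- apply: star_induces_subtree; first by rewrite inE.
  by apply/subsetP; case=> [?|?|?| | |]; rewrite !inE.
Qed.

Lemma cover_ve_dominating (J : {set 'I_q}) :
  is_cover C J -> ve_dominating G (VU p q |: [set VB p j | j in J]).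
Proof.
move=> covJ; pose D := VU p q |: [set VB p j | j in J].
have dom_by_U x y : VU p q \in N x :|: N y -> (N x :|: N y) :&: D != set0.
  by move=> Uxy; apply/set0Pn; exists (VU p q); rewrite inE Uxy setU11.
have dom_AZ i : (N (VA q i) :|: N (VZ q i)) :&: D != set0.
  have : i \in \bigcup_(j in J) C j by rewrite covJ inE.
  case/bigcupP=> j jJ ij; apply/set0Pn; exists (VB p j).
  by rewrite !inE /= ij imset_f ?orbT.
case=> [i|j|i| | |]; case=> [i'|j'|i'| | |] //= Exy;
  try by apply: dom_by_U; rewrite !inE.
- by move/eqP: Exy <-; apply: dom_AZ.
- by move/eqP: Exy ->; rewrite setUC; apply: dom_AZ.
Qed.

Definition vtx_set (x : vtx p q) : option 'I_q :=
  match x with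
  | VB j => Some j
  | VA i | VZ i => [pick j | i \in C j]
  | _ => None
  end.

Definition dom_cover (D : {set vtx p q}) : {set 'I_q} :=
  [set j | Some j \in vtx_set @: D].

Lemma card_dom_cover_lt (D : {set vtx p q}) :
  ve_dominating G D -> #|dom_cover D| < #|D|.
Proof.
move=> domD; apply: leq_trans (leq_imset_card vtx_set D).
apply: card_Some_preimset_lt.
have /set0Pn[x] := domD (VV p q) (VU' p q) isT.
rewrite !inE => /andP[Nx xD]; apply/imsetP; exists x => //.
by move: Nx {xD}; case: x.
Qed.

Hypothesis C_covers : \bigcup_(j < q) C j = [set: 'I_p].

Lemma vtx_set_AZ (i : 'I_p) x : x \in N (VA q i) :|: N (VZ q i) ->
  exists2 j, vtx_set x = Some j & i \in C j.
Proof.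
have pick_set : exists2 j, [pick j | i \in C j] = Some j & i \in C j.
  case: pickP => [j ij|no_j]; first by exists j.
  have : i \in \bigcup_(j < q) C j by rewrite C_covers inE.
  by case/bigcupP=> j _; rewrite no_j.
rewrite !inE; case: x => [i'|j|i'| | |] //=; rewrite ?orbF.
- by case/orP=> [/eqP[->]|/eqP ->].
- by move=> ij; exists j.
- by case/orP=> [/eqP <-|/eqP[->]].
Qed.

Lemma dom_cover_is_cover (D : {set vtx p q}) :
  ve_dominating G D -> is_cover C (dom_cover D).
Proof.
move=> domD; apply/setP => i; rewrite inE; apply/bigcupP.
have /set0Pn[x] := domD (VA q i) (VZ q i) (eqxx i).
rewrite inE => /andP[/vtx_set_AZ[j xj ij] xD].
by exists j; rewrite // inE -xj imset_f.
Qed.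

End Construction.

Theorem lemma3 (p q : nat) (C : 'I_q -> {set 'I_p})
  (hqp : q <= p) (hcov : \bigcup_(j < q) C j = [set: 'I_p]) :
  star_convex_wrt (@Gadj p q C) (GX p q) (GY p q) (VU p q) /\
  forall t : nat,
    (exists J : {set 'I_q}, is_cover C J /\ #|J| <= t) <->
    (exists D : {set vtx p q}, ve_dominating (@Gadj p q C) D /\ #|D| <= t.+1).
Proof.
split; first exact: Gadj_star_convex.
move=> t; split.
- case=> J [covJ tJ]; exists (VU p q |: [set VB p j | j in J]); split.
    exact: cover_ve_dominating.
  by apply: leq_trans (card_setU1_imset_le _ _ J) _; rewrite ltnS.
- case=> D [domD tD]; exists (dom_cover C D); split.
    exact: dom_cover_is_cover.
  by rewrite -ltnS; apply: leq_trans (card_dom_cover_lt domD) tD.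
Qed.
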